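(* Let $\alpha_a$ be a labeled dGL hybrid game, $\varphi$ a dGL formula, and $S$ an Angelic subvalue map for $\alpha_a$ compatible with $\varphi$, i.e. $\models S(b)\rightarrow\langle \mathrm{suffix}_b(\alpha_a)\rangle S(\mathsf{end})$ for every $b\in\mathrm{nodes}(\alpha_a)$ and $\models S(\mathsf{end})\rightarrow\varphi$. Then for every subgame label $b\in\mathrm{nodes}(\alpha_a)$, every state satisfying $S(a)$ satisfies $$\big\langle \mathrm{prefix}_b(\mathcal{U}(\alpha_a,S))\big\rangle\,\big\langle \mathrm{suffix}_b(\alpha_a)\big\rangle\,\varphi .$$
   Context: Differential game logic (dGL). Hybrid games are generated by $\alpha,\beta ::= x:=e \mid \alpha;\beta \mid ?Q \mid \{x'=f(x)\,\&\,Q\} \mid \alpha^{*} \mid \alpha\cup\beta \mid x:=* \mid\ !Q \mid \{x'=f(x)\,\&\,Q\}^{d} \mid \alpha^{\times} \mid \alpha\cap\beta \mid x:=\otimes$, with $x$ a real variable (vector for ODEs), $e,f(x)$ polynomial terms, $Q$ a formula. Players Angel and Demon: $x:=e$ deterministic assignment; in $x:=*$ Angel (in $x:=\otimes$ Demon) assigns any real to $x$; in $\{x'=f(x)\&Q\}$ Angel (in $\{x'=f(x)\&Q\}^d$ Demon) chooses a duration $r\ge 0$ of following the ODE with $Q$ true throughout; $?Q$ makes Angel lose and $!Q$ makes Demon lose if $Q$ is false (no effect otherwise); in $\alpha\cup\beta$ Angel (in $\alpha\cap\beta$ Demon) chooses the branch; in $\alpha^*$ Angel (in $\alpha^\times$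 Demon) decides before each iteration whether to repeat $\alpha$ or stop; $\alpha;\beta$ is sequential composition. $\mathrm{skip}$ denotes $?\mathit{true}$. Formulas: polynomial (in)equalities closed under connectives, real quantifiers, and modalities $\langle\alpha\rangle\varphi$ (Angel has a winning strategy in $\alpha$ to reach $\varphi$ whatever Demon does) and $[\alpha]\varphi\equiv\neg\langle\alpha\rangle\neg\varphi$, with the standard dGL semantics: $\langle x:=e\rangle\varphi\leftrightarrow\varphi(x\mapsto e)$, $\langle x:=*\rangle\varphi\leftrightarrow\exists x\varphi$, $\langle x:=\otimes\rangle\varphi\leftrightarrow\forall x\varphi$, $\langle ?Q\rangle\varphi\leftrightarrow Q\wedge\varphi$, $\langle !Q\rangle\varphi\leftrightarrow(Q\rightarrow\varphi)$, $\langle\alpha\cup\beta\rangle\varphi\leftrightarrow\langle\alpha\rangle\varphi\vee\langle\beta\rangle\varphi$, $\langle\alpha\cap\beta\rangle\varphi\leftrightarrow\langle\alpha\rangle\varphi\wedge\langle\beta\rangle\varphi$, $\langle\alpha;\beta\rangle\varphi\leftrightarrow\langle\alpha\rangle\langle\beta\rangle\varphi$; the Angel ODE holds iff some solution of some duration $r\ge0$ staying in $Q$ ends in $\varphi$, the Demon ODE iff all such solutions end in $\varphi$; $\langle\alpha^*\rangle\varphi$ denotes the least set $Z$ of states with $[\![\varphi]\!]\cup\varsigma_\alpha(Z)\subseteq Z$ and $\langle\alpha^\times\rangle\varphi$ the greatest $Z$ with $Z\subseteq[\![\varphi]\!]\cap\varsigma_\alpha(Z)$, where $\varsigma_\alpha(Z)$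 is Angel's winning region in $\alpha$ for goal $Z$. $\models\psi$ means $\psi$ is valid. Labels. Every node of the syntax tree of a game carries a unique label (equal subgames at different positions get different labels). $\alpha_a$ is a game whose root has label $a$; $\mathrm{nodes}(\alpha_a)$ is the set of labels of its subgames (including $a$). A special label $\mathsf{end}\notin\mathrm{nodes}(\alpha_a)$ is used. A map $S$ assigns formulas to a set of labels containing $\mathrm{nodes}(\alpha_a)\cup\{\mathsf{end}\}$; $S\{\mathsf{end}\mapsto Q\}$ is $S$ with the value at $\mathsf{end}$ replaced by $Q$. Below $\gamma_g,\delta_d$ denote immediate subgames with root labels $g,d$. Game suffix $\mathrm{suffix}_b(\alpha_a)$ for $b\in\mathrm{nodes}(\alpha_a)$: if $b=a$, it is $\alpha_a$. Otherwise: for $\alpha_a=((\gamma_g)^* )_a$ or $((\gamma_g)^\times)_a$ it is $\mathrm{suffix}_b(\gamma_g);\alpha_a$; for $(\gamma_g\cup\delta_d)_a$ or $(\gamma_g\cap\delta_d)_a$ it is $\mathrm{suffix}_b(\gamma_g)$ if $b\in\mathrm{nodes}(\gamma_g)$ and $\mathrm{suffix}_b(\delta_d)$ otherwise; for $(\gamma_g;\delta_d)_a$ it is $\mathrm{suffix}_b(\gamma_g);\delta_d$ if $b\in\mathrm{nodes}(\gamma_g)$ and $\mathrm{suffix}_b(\delta_d)$ otherwise. Game prefix $\mathrm{prefix}_b(\alpha_a)$ for $b\in\mathrm{nodes}(\alpha_a)$: if $b=a$ and $\alpha$ is not a loop, it is $\mathrm{skip}$; if $b=a$ and $\alpha$ is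 a loop ($^*$ or $^\times$), it is $\alpha_a$. Otherwise: for loops $((\gamma_g)^* )_a$, $((\gamma_g)^\times)_a$ it is $\alpha_a;\mathrm{prefix}_b(\gamma_g)$; for $\cup,\cap$ it is the prefix within the branch containing $b$; for $(\gamma_g;\delta_d)_a$ it is $\mathrm{prefix}_b(\gamma_g)$ if $b\in\mathrm{nodes}(\gamma_g)$ and $\gamma_g;\mathrm{prefix}_b(\delta_d)$ otherwise. Angelic subvalue map: a map $S$ with $\models S(b)\rightarrow\langle\mathrm{suffix}_b(\alpha_a)\rangle S(\mathsf{end})$ for all $b\in\mathrm{nodes}(\alpha_a)$; it is compatible with $\varphi$ if $\models S(\mathsf{end})\rightarrow\varphi$. Universal projection $\mathcal{U}(\alpha_a,S)$, defined recursively: $(x:=* )_a\mapsto (x:=\otimes)_a;\,!S(\mathsf{end})$; $\{x'=f(x)\&Q\}_a\mapsto(\{x'=f(x)\&Q\}^d)_a;\,!S(\mathsf{end})$; $(\gamma_g\cup\delta_d)_a\mapsto(!S(g);\mathcal{U}(\gamma_g,S))\cap_a(!S(d);\mathcal{U}(\delta_d,S))$; $((\gamma_g)^* )_a\mapsto\big((!S(g);\mathcal{U}(\gamma_g,S\{\mathsf{end}\mapsto S(a)\}))^{\times}\big)_a;\,!S(\mathsf{end})$; $(\gamma_g;\delta_d)_a\mapsto\mathcal{U}(\gamma_g,S\{\mathsf{end}\mapsto S(d)\});_a\,\mathcal{U}(\delta_d,S)$; $(\gamma_g\cap\delta_d)_a\mapsto\mathcal{U}(\gamma_g,S)\cap_a\mathcal{U}(\delta_d,S)$;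 $((\gamma_g)^\times)_a\mapsto(\mathcal{U}(\gamma_g,S\{\mathsf{end}\mapsto S(a)\})^\times)_a$; $x:=e$, $x:=\otimes$, $?Q$, $!Q$, $\{x'=f(x)\&Q\}^d$ are left unchanged. Labels are preserved (the node replacing the node labeled $a$, e.g. the Demon counterpart $x:=\otimes$, the dual ODE, $\cap$, or the loop $^\times$, keeps label $a$; subgames keep their labels) and newly introduced nodes get fresh labels. *)

From Stdlib Require Import Reals QArith Qreals List.
From Coquelicot Require Import Coquelicot.
Open Scope R_scope.

(* Labels of input games are natural numbers [LBase n]; [LFresh a k] are the
   fresh labels introduced by the universal projection at the node labelled a
   (k-th new node); [LEnd] is the special label end. *)
Inductive label : Type :=
| LBase (n : nat)
| LFresh (a : label) (k : nat)
| LEnd.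

Definition label_eq_dec : forall l1 l2 : label, {l1 = l2} + {l1 <> l2}.
Proof. decide equality; apply Nat.eq_dec. Defined.

Definition var := nat.

Inductive term : Type :=
| TVar (x : var)
| TConst (q : Q)
| TNeg (e : term)
| TPlus (e1 e2 : term)
| TTimes (e1 e2 : term).

Inductive formula : Type :=
| FTrue
| FFalse
| FEq (e1 e2 : term)
| FLe (e1 e2 : term)
| FLt (e1 e2 : term)
| FNot (p : formula)
| FAnd (p q : formula)
| FOr (p q : formula)
| FImp (p q : formula)
| FForall (x : var) (p : formula)
| FExists (x : var) (p : formula)
| FDia (g : game) (p : formula)
| FBox (g : game) (p : formula)
with game : Type :=
| GAsgn (a : label) (x : var) (e : term)
| GAsgnA (a : label) (x : var)
| GAsgnD (a : label) (x : var)
| GTest (a : label) (Q : formula)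
| GDTest (a : label) (Q : formula)
| GODE (a : label) (ode : list (var * term)) (Q : formula)
| GODED (a : label) (ode : list (var * term)) (Q : formula)
| GSeq (a : label) (g1 g2 : game)
| GChoice (a : label) (g1 g2 : game)
| GDChoice (a : label) (g1 g2 : game)
| GStar (a : label) (g : game)
| GCross (a : label) (g : game).

Definition state := var -> R.

Definition upd (s : state) (x : var) (v : R) : state :=
  fun y => if Nat.eq_dec y x then v else s y.

Fixpoint tsem (e : term) (s : state) : R :=
  match e with
  | TVar x => s x
  | TConst q => Q2R q
  | TNeg e => - tsem e s
  | TPlus e1 e2 => tsem e1 s + tsem e2 s
  | TTimes e1 e2 => tsem e1 s * tsem e2 s
  end.

Definition ode_sol (ode : list (var * term)) (Q : state -> Prop)
  (s : state) (r : R) (phi : R -> state) : Prop :=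
  0 <= r /\ phi 0 = s /\
  (forall t, 0 <= t <= r -> forall y, ~ In y (map fst ode) -> phi t y = s y) /\
  (forall t, 0 <= t <= r -> forall x e, In (x, e) ode ->
       is_derive (fun tau => phi tau x) t (tsem e (phi t))) /\
  (forall t, 0 <= t <= r -> Q (phi t)).

Fixpoint fsem (p : formula) (s : state) {struct p} : Prop :=
  match p with
  | FTrue => True
  | FFalse => False
  | FEq e1 e2 => tsem e1 s = tsem e2 s
  | FLe e1 e2 => tsem e1 s <= tsem e2 s
  | FLt e1 e2 => tsem e1 s < tsem e2 s
  | FNot p => ~ fsem p s
  | FAnd p q => fsem p s /\ fsem q s
  | FOr p q => fsem p s \/ fsem q s
  | FImp p q => fsem p s -> fsem q s
  | FForall x p => forall v, fsem p (upd s x v)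
  | FExists x p => exists v, fsem p (upd s x v)
  | FDia g p => win g (fsem p) s
  | FBox g p => ~ win g (fun t => ~ fsem p t) s
  end
with win (g : game) (X : state -> Prop) (s : state) {struct g} : Prop :=
  match g with
  | GAsgn _ x e => X (upd s x (tsem e s))
  | GAsgnA _ x => exists v, X (upd s x v)
  | GAsgnD _ x => forall v, X (upd s x v)
  | GTest _ Q => fsem Q s /\ X s
  | GDTest _ Q => fsem Q s -> X s
  | GODE _ ode Q => exists r phi, ode_sol ode (fsem Q) s r phi /\ X (phi r)
  | GODED _ ode Q => forall r phi, ode_sol ode (fsem Q) s r phi -> X (phi r)
  | GSeq _ g1 g2 => win g1 (win g2 X) s
  | GChoice _ g1 g2 => win g1 X s \/ win g2 X s
  | GDChoice _ g1 g2 => win g1 X s /\ win g2 X s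
  | GStar _ g1 =>   (* least Z with X u varsigma_g1(Z) <= Z *)
      forall Z : state -> Prop, (forall t, X t \/ win g1 Z t -> Z t) -> Z s
  | GCross _ g1 =>  (* greatest Z with Z <= X n varsigma_g1(Z) *)
      exists Z : state -> Prop, Z s /\ (forall t, Z t -> X t /\ win g1 Z t)
  end.

Definition valid (p : formula) : Prop := forall s, fsem p s.

Definition lab (g : game) : label :=
  match g with
  | GAsgn a _ _ | GAsgnA a _ | GAsgnD a _ | GTest a _ | GDTest a _
  | GODE a _ _ | GODED a _ _ | GSeq a _ _ | GChoice a _ _ | GDChoice a _ _
  | GStar a _ | GCross a _ => a
  end.

Fixpoint nodes (g : game) : list label :=
  match g with
  | GSeq a g1 g2 | GChoice a g1 g2 | GDChoice a g1 g2 => a :: nodes g1 ++ nodes g2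
  | GStar a g1 | GCross a g1 => a :: nodes g1
  | _ => lab g :: nil
  end.

(* Label used for the (semantically irrelevant) auxiliary nodes built by
   suffix / prefix. *)
Definition aux_label : label := LEnd.

Definition skip : game := GTest aux_label FTrue.

Fixpoint suffix (b : label) (g : game) : game :=
  if label_eq_dec b (lab g) then g else
  match g with
  | GStar _ g1 | GCross _ g1 => GSeq aux_label (suffix b g1) g
  | GChoice _ g1 g2 | GDChoice _ g1 g2 =>
      if in_dec label_eq_dec b (nodes g1) then suffix b g1 else suffix b g2
  | GSeq _ g1 g2 =>
      if in_dec label_eq_dec b (nodes g1) then GSeq aux_label (suffix b g1) g2
      else suffix b g2
  | _ => g
  end.

Fixpoint prefix (b : label) (g : game) : game :=
  if label_eq_dec b (lab g) then
    match g with
    | GStar _ _ | GCross _ _ => g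
    | _ => skip
    end
  else
  match g with
  | GStar _ g1 | GCross _ g1 => GSeq aux_label g (prefix b g1)
  | GChoice _ g1 g2 | GDChoice _ g1 g2 =>
      if in_dec label_eq_dec b (nodes g1) then prefix b g1 else prefix b g2
  | GSeq _ g1 g2 =>
      if in_dec label_eq_dec b (nodes g1) then prefix b g1
      else GSeq aux_label g1 (prefix b g2)
  | _ => skip
  end.

Definition setEnd (S : label -> formula) (Q : formula) : label -> formula :=
  fun l => if label_eq_dec l LEnd then Q else S l.

Definition angelic_subvalue_map (g : game) (S : label -> formula) : Prop :=
  forall b, In b (nodes g) -> valid (FImp (S b) (FDia (suffix b g) (S LEnd))).

Definition compatible (S : label -> formula) (phi : formula) : Prop :=
  valid (FImp (S LEnd) phi).

Fixpoint uproj (g : game) (S : label -> formula) : game :=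
  match g with
  | GAsgnA a x =>
      GSeq (LFresh a 0) (GAsgnD a x) (GDTest (LFresh a 1) (S LEnd))
  | GODE a ode Q =>
      GSeq (LFresh a 0) (GODED a ode Q) (GDTest (LFresh a 1) (S LEnd))
  | GChoice a g1 g2 =>
      GDChoice a
        (GSeq (LFresh a 0) (GDTest (LFresh a 1) (S (lab g1))) (uproj g1 S))
        (GSeq (LFresh a 2) (GDTest (LFresh a 3) (S (lab g2))) (uproj g2 S))
  | GStar a g1 =>
      GSeq (LFresh a 0)
        (GCross a (GSeq (LFresh a 1) (GDTest (LFresh a 2) (S (lab g1)))
                        (uproj g1 (setEnd S (S a)))))
        (GDTest (LFresh a 3) (S LEnd))
  | GSeq a g1 g2 => GSeq a (uproj g1 (setEnd S (S (lab g2)))) (uproj g2 S)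
  | GDChoice a g1 g2 => GDChoice a (uproj g1 S) (uproj g2 S)
  | GCross a g1 => GCross a (uproj g1 (setEnd S (S a)))
  | _ => g
  end.

(* well-labelled input game: unique labels, all drawn from the base label set
   (so in particular end and the fresh labels do not occur). *)
Definition well_labelled (g : game) : Prop :=
  NoDup (nodes g) /\ forall l, In l (nodes g) -> exists n, l = LBase n.

(* Projection only turns Angel's choices into Demon's choices guarded by
   [!S(c)] for the chosen subgame [c]; since [S(c)] implies that Angel wins [c],
   any Angel strategy for [alpha] still wins [U(alpha, S)].  For a loop, the
   winning region of the loop itself serves as the invariant of the Demonic
   repetition.  Playing [prefix_b] of the projection therefore ends
   in a state from which Angel wins the rest of [alpha] from [b], and hence
   reaches [phi] by compatibility. *)

From Stdlib Require Import Reals List.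

Lemma win_mono g (X Y : state -> Prop) :
  (forall t, X t -> Y t) -> forall s, win g X s -> win g Y s.
Proof. revert X Y; induction g; intros X Y HXY s; simpl; firstorder. Qed.

Lemma win_cross_unfold a g K t :
  win (GCross a g) K t -> K t /\ win g (win (GCross a g) K) t.
Proof.
  intros [Z [HZt HZ]]. destruct (HZ t HZt) as [HK Hg]. split; [exact HK|].
  apply win_mono with Z; [|exact Hg]. intros u Hu; exists Z; auto.
Qed.

Lemma NoDup_app_disjoint {A} (l1 l2 : list A) x :
  NoDup (l1 ++ l2) -> In x l1 -> ~ In x l2.
Proof.
  induction l1 as [|y l1 IH]; simpl; intros Hnd Hx; [tauto|].
  apply NoDup_cons_iff in Hnd as [Hy Hnd]. destruct Hx as [<-|Hx].
  - intro; apply Hy, in_or_app; auto.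
  - exact (IH Hnd Hx).
Qed.

(* Stated on the node list, so that it applies to [GSeq], [GChoice] and
   [GDChoice] alike. *)
Lemma well_labelled_binary a g1 g2 :
  NoDup (a :: nodes g1 ++ nodes g2) /\
  (forall l, In l (a :: nodes g1 ++ nodes g2) -> exists n, l = LBase n) ->
  well_labelled g1 /\ well_labelled g2 /\ ~ In a (nodes g1) /\ ~ In a (nodes g2) /\
  (forall b, In b (nodes g1) -> ~ In b (nodes g2)).
Proof.
  intros [Hnd Hbase]. apply NoDup_cons_iff in Hnd as [Ha Hnd].
  repeat split.
  - exact (NoDup_app_remove_r _ _ Hnd).
  - intros l Hl; apply Hbase; right; apply in_or_app; auto.
  - exact (NoDup_app_remove_l _ _ Hnd).
  - intros l Hl; apply Hbase; right; apply in_or_app; auto.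
  - intro; apply Ha, in_or_app; auto.
  - intro; apply Ha, in_or_app; auto.
  - intros b Hb; exact (NoDup_app_disjoint _ _ _ Hnd Hb).
Qed.

Lemma well_labelled_unary a g :
  NoDup (a :: nodes g) /\ (forall l, In l (a :: nodes g) -> exists n, l = LBase n) ->
  well_labelled g /\ ~ In a (nodes g).
Proof.
  intros [Hnd Hbase]. apply NoDup_cons_iff in Hnd as [Ha Hnd].
  repeat split; auto. intros l Hl; apply Hbase; right; exact Hl.
Qed.

Lemma lab_in_nodes g : In (lab g) (nodes g).
Proof. destruct g; simpl; auto. Qed.

Lemma setEnd_nodes g S Q b :
  well_labelled g -> In b (nodes g) -> setEnd S Q b = S b.
Proof.
  intros [_ Hbase] Hb. destruct (Hbase b Hb) as [n ->].
  unfold setEnd; destruct label_eq_dec; congruence.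
Qed.

Lemma in_nodes_uproj g S n :
  In (LBase n) (nodes (uproj g S)) <-> In (LBase n) (nodes g).
Proof.
  revert S; induction g; intros S; simpl; rewrite ?in_app_iff; simpl; rewrite ?in_app_iff;
    rewrite ?IHg, ?IHg1, ?IHg2; intuition congruence.
Qed.

Ltac decide_labels :=
  intros; simpl; repeat first [destruct label_eq_dec | destruct in_dec];
  first [reflexivity | tauto].

Lemma suffix_lab g : suffix (lab g) g = g.
Proof. destruct g; simpl; destruct label_eq_dec; congruence. Qed.

Lemma suffix_seq_l a g1 g2 b : b <> a -> In b (nodes g1) ->
  suffix b (GSeq a g1 g2) = GSeq aux_label (suffix b g1) g2.
Proof. decide_labels. Qed.

Lemma suffix_seq_r a g1 g2 b : b <> a -> ~ In b (nodes g1) ->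
  suffix b (GSeq a g1 g2) = suffix b g2.
Proof. decide_labels. Qed.

Lemma suffix_choice_l a g1 g2 b : b <> a -> In b (nodes g1) ->
  suffix b (GChoice a g1 g2) = suffix b g1.
Proof. decide_labels. Qed.

Lemma suffix_choice_r a g1 g2 b : b <> a -> ~ In b (nodes g1) ->
  suffix b (GChoice a g1 g2) = suffix b g2.
Proof. decide_labels. Qed.

Lemma suffix_dchoice_l a g1 g2 b : b <> a -> In b (nodes g1) ->
  suffix b (GDChoice a g1 g2) = suffix b g1.
Proof. decide_labels. Qed.

Lemma suffix_dchoice_r a g1 g2 b : b <> a -> ~ In b (nodes g1) ->
  suffix b (GDChoice a g1 g2) = suffix b g2.
Proof. decide_labels. Qed.

Lemma suffix_star a g b : b <> a ->
  suffix b (GStar a g) = GSeq aux_label (suffix b g) (GStar a g).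
Proof. decide_labels. Qed.

Lemma suffix_cross a g b : b <> a ->
  suffix b (GCross a g) = GSeq aux_label (suffix b g) (GCross a g).
Proof. decide_labels. Qed.

Lemma prefix_seq_l a g1 g2 b : b <> a -> In b (nodes g1) ->
  prefix b (GSeq a g1 g2) = prefix b g1.
Proof. decide_labels. Qed.

Lemma prefix_seq_r a g1 g2 b : b <> a -> ~ In b (nodes g1) ->
  prefix b (GSeq a g1 g2) = GSeq aux_label g1 (prefix b g2).
Proof. decide_labels. Qed.

Lemma prefix_dchoice_l a g1 g2 b : b <> a -> In b (nodes g1) ->
  prefix b (GDChoice a g1 g2) = prefix b g1.
Proof. decide_labels. Qed.

Lemma prefix_dchoice_r a g1 g2 b : b <> a -> ~ In b (nodes g1) ->
  prefix b (GDChoice a g1 g2) = prefix b g2.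
Proof. decide_labels. Qed.

Lemma prefix_cross a g b : b <> a ->
  prefix b (GCross a g) = GSeq aux_label (GCross a g) (prefix b g).
Proof. decide_labels. Qed.

Lemma prefix_cross_lab a g : prefix a (GCross a g) = GCross a g.
Proof. simpl; destruct label_eq_dec; congruence. Qed.

(* The goal is a set of states rather than the formula [S LEnd] because, for
   the first half [g1] of [g1; g2], it becomes the winning region of [g2]. *)
Definition subvalue_map_for (g : game) (S : label -> formula) (K : state -> Prop) : Prop :=
  (forall b, In b (nodes g) -> forall t, fsem (S b) t -> win (suffix b g) K t) /\
  (forall t, fsem (S LEnd) t -> K t).

Lemma subvalue_map_of_angelic g S :
  angelic_subvalue_map g S -> subvalue_map_for g S (fsem (S LEnd)).
Proof. intros HS; split; [exact HS | auto]. Qed.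

Lemma subvalue_map_root g S K t :
  subvalue_map_for g S K -> fsem (S (lab g)) t -> win g K t.
Proof. intros [HS _] Ht. rewrite <- (suffix_lab g). exact (HS _ (lab_in_nodes g) t Ht). Qed.

Lemma subvalue_map_restrict g h S K :
  (forall b, In b (nodes h) -> In b (nodes g) /\ suffix b g = suffix b h) ->
  subvalue_map_for g S K -> subvalue_map_for h S K.
Proof.
  intros Hsub [HS Hend]. split; [|exact Hend].
  intros b Hb t Ht. destruct (Hsub b Hb) as [Hbg <-]. exact (HS b Hbg t Ht).
Qed.

Lemma subvalue_map_head g h k S K :
  well_labelled h ->
  (forall b, In b (nodes h) ->
     In b (nodes g) /\ suffix b g = GSeq aux_label (suffix b h) k) ->
  In (lab k) (nodes g) -> suffix (lab k) g = k ->
  subvalue_map_for g S K -> subvalue_map_for h (setEnd S (S (lab k))) (win k K).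
Proof.
  intros Hwl Hsub Hk Hsufk [HS _]. split.
  - intros b Hb t Ht. rewrite (setEnd_nodes _ _ _ _ Hwl Hb) in Ht.
    destruct (Hsub b Hb) as [Hbg Hsuf].
    pose proof (HS b Hbg t Ht) as Hw. rewrite Hsuf in Hw. exact Hw.
  - intros t Ht. pose proof (HS _ Hk t Ht) as Hw. rewrite Hsufk in Hw. exact Hw.
Qed.

Lemma subvalue_map_seq a g1 g2 S K :
  well_labelled (GSeq a g1 g2) -> subvalue_map_for (GSeq a g1 g2) S K ->
  subvalue_map_for g1 (setEnd S (S (lab g2))) (win g2 K) /\ subvalue_map_for g2 S K.
Proof.
  intros Hwl HS. destruct (well_labelled_binary _ _ _ Hwl) as (W1 & _ & Na1 & Na2 & D).
  assert (Hg2 : forall b, In b (nodes g2) ->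
            In b (nodes (GSeq a g1 g2)) /\ suffix b (GSeq a g1 g2) = suffix b g2).
  { intros b Hb. split; [right; apply in_or_app; auto|].
    apply suffix_seq_r; [intros ->; contradiction | intro Hb1; exact (D b Hb1 Hb)]. }
  split; [|exact (subvalue_map_restrict _ _ _ _ Hg2 HS)].
  apply (subvalue_map_head (GSeq a g1 g2)); auto.
  - intros b Hb. split; [right; apply in_or_app; auto|].
    apply suffix_seq_l; [intros ->; contradiction | exact Hb].
  - apply Hg2, lab_in_nodes.
  - rewrite (proj2 (Hg2 _ (lab_in_nodes g2))). apply suffix_lab.
Qed.

Lemma subvalue_map_choice a g1 g2 S K :
  well_labelled (GChoice a g1 g2) -> subvalue_map_for (GChoice a g1 g2) S K ->
  subvalue_map_for g1 S K /\ subvalue_map_for g2 S K.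
Proof.
  intros Hwl HS. destruct (well_labelled_binary _ _ _ Hwl) as (_ & _ & Na1 & Na2 & D).
  split; (eapply subvalue_map_restrict; [|exact HS]); intros b Hb;
    (split; [right; apply in_or_app; auto|]).
  - apply suffix_choice_l; [intros ->; contradiction | exact Hb].
  - apply suffix_choice_r; [intros ->; contradiction | intro Hb1; exact (D b Hb1 Hb)].
Qed.

Lemma subvalue_map_dchoice a g1 g2 S K :
  well_labelled (GDChoice a g1 g2) -> subvalue_map_for (GDChoice a g1 g2) S K ->
  subvalue_map_for g1 S K /\ subvalue_map_for g2 S K.
Proof.
  intros Hwl HS. destruct (well_labelled_binary _ _ _ Hwl) as (_ & _ & Na1 & Na2 & D).
  split; (eapply subvalue_map_restrict; [|exact HS]); intros b Hb;
    (split; [right; apply in_or_app; auto|]).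
  - apply suffix_dchoice_l; [intros ->; contradiction | exact Hb].
  - apply suffix_dchoice_r; [intros ->; contradiction | intro Hb1; exact (D b Hb1 Hb)].
Qed.

Lemma subvalue_map_star a g S K :
  well_labelled (GStar a g) -> subvalue_map_for (GStar a g) S K ->
  subvalue_map_for g (setEnd S (S a)) (win (GStar a g) K).
Proof.
  intros Hwl HS. destruct (well_labelled_unary _ _ Hwl) as [W Na].
  apply (subvalue_map_head (GStar a g) g (GStar a g)); auto.
  - intros b Hb. split; [right; exact Hb|].
    apply suffix_star; intros ->; contradiction.
  - left; reflexivity.
  - apply suffix_lab.
Qed.

Lemma subvalue_map_cross a g S K :
  well_labelled (GCross a g) -> subvalue_map_for (GCross a g) S K ->
  subvalue_map_for g (setEnd S (S a)) (win (GCross a g) K).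
Proof.
  intros Hwl HS. destruct (well_labelled_unary _ _ Hwl) as [W Na].
  apply (subvalue_map_head (GCross a g) g (GCross a g)); auto.
  - intros b Hb. split; [right; exact Hb|].
    apply suffix_cross; intros ->; contradiction.
  - left; reflexivity.
  - apply suffix_lab.
Qed.

Lemma subvalue_map_star_lab a g S K t :
  well_labelled (GStar a g) -> subvalue_map_for (GStar a g) S K ->
  fsem (S (lab g)) t -> win g (win (GStar a g) K) t.
Proof.
  intros Hwl HS Ht. apply (subvalue_map_root _ (setEnd S (S a))).
  - exact (subvalue_map_star _ _ _ _ Hwl HS).
  - rewrite (setEnd_nodes g); [exact Ht | apply (well_labelled_unary _ _ Hwl) | apply lab_in_nodes].
Qed.

Lemma win_uproj g : forall S K s,
  well_labelled g -> subvalue_map_for g S K -> win g K s -> win (uproj g S) K s.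
Proof.
  induction g as [| | | | | | | a g1 IH1 g2 IH2 | a g1 IH1 g2 IH2 | a g1 IH1 g2 IH2
                  | a g IH | a g IH];
    intros S K s Hwl HS Hs; try exact Hs.
  - intros v Hv; exact (proj2 HS _ Hv).
  - intros r phi _ Hv; exact (proj2 HS _ Hv).
  - destruct (well_labelled_binary _ _ _ Hwl) as (W1 & W2 & _).
    destruct (subvalue_map_seq _ _ _ _ _ Hwl HS) as [HS1 HS2].
    cbn [uproj win]. apply win_mono with (win g2 K).
    + intros t Ht; exact (IH2 _ _ _ W2 HS2 Ht).
    + exact (IH1 _ _ _ W1 HS1 Hs).
  - destruct (well_labelled_binary _ _ _ Hwl) as (W1 & W2 & _).
    destruct (subvalue_map_choice _ _ _ _ _ Hwl HS) as [HS1 HS2].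
    split; intros Ht.
    + exact (IH1 _ _ _ W1 HS1 (subvalue_map_root _ _ _ _ HS1 Ht)).
    + exact (IH2 _ _ _ W2 HS2 (subvalue_map_root _ _ _ _ HS2 Ht)).
  - destruct (well_labelled_binary _ _ _ Hwl) as (W1 & W2 & _).
    destruct (subvalue_map_dchoice _ _ _ _ _ Hwl HS) as [HS1 HS2].
    split; [exact (IH1 _ _ _ W1 HS1 (proj1 Hs)) | exact (IH2 _ _ _ W2 HS2 (proj2 Hs))].
  - destruct (well_labelled_unary _ _ Hwl) as [W _].
    exists (win (GStar a g) K). split; [exact Hs|].
    intros t _. split; [exact (proj2 HS t)|]. intros Ht.
    apply (IH _ _ _ W (subvalue_map_star _ _ _ _ Hwl HS)).
    exact (subvalue_map_star_lab _ _ _ _ _ Hwl HS Ht).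
  - destruct (well_labelled_unary _ _ Hwl) as [W _].
    exists (win (GCross a g) K). split; [exact Hs|].
    intros t Ht. destruct (win_cross_unfold _ _ _ _ Ht) as [HKt Hgt].
    split; [exact HKt|].
    exact (IH _ _ _ W (subvalue_map_cross _ _ _ _ Hwl HS) Hgt).
Qed.

Lemma win_uproj_star_body a g S K t :
  well_labelled (GStar a g) -> subvalue_map_for (GStar a g) S K ->
  fsem (S (lab g)) t -> win (uproj g (setEnd S (S a))) (win (GStar a g) K) t.
Proof.
  intros Hwl HS Ht. apply win_uproj.
  - apply (well_labelled_unary _ _ Hwl).
  - exact (subvalue_map_star _ _ _ _ Hwl HS).
  - exact (subvalue_map_star_lab _ _ _ _ _ Hwl HS Ht).
Qed.

Lemma win_uproj_cross_body a g S K t :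
  well_labelled (GCross a g) -> subvalue_map_for (GCross a g) S K ->
  win (GCross a g) K t -> win (uproj g (setEnd S (S a))) (win (GCross a g) K) t.
Proof.
  intros Hwl HS Ht. apply win_uproj.
  - apply (well_labelled_unary _ _ Hwl).
  - exact (subvalue_map_cross _ _ _ _ Hwl HS).
  - exact (proj2 (win_cross_unfold _ _ _ _ Ht)).
Qed.

Ltac label_side_conditions :=
  first [ assumption | discriminate | now left
        | simpl; rewrite ?in_nodes_uproj; intuition discriminate ].

Lemma win_prefix_uproj_root g S K b s :
  b = lab g -> well_labelled g -> subvalue_map_for g S K -> win g K s ->
  win (prefix b (uproj g S)) (win (suffix b g) K) s.
Proof.
  intros -> Hwl HS Hs. rewrite suffix_lab.
  destruct (proj2 Hwl _ (lab_in_nodes g)) as [n Hn].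
  destruct g as [| | | | | | | | | | a g | a g]; cbn [lab uproj] in Hn |- *; subst;
    try solve [ cbn [prefix nodes lab]; repeat first [destruct label_eq_dec | destruct in_dec];
                first [ split; [exact I | exact Hs] | congruence
                      | exfalso; auto with datatypes ] ].
  - rewrite prefix_seq_l, prefix_cross_lab by label_side_conditions.
    exists (win (GStar (LBase n) g) K). split; [exact Hs|].
    intros t Ht; split; [exact Ht | intros Hl; exact (win_uproj_star_body _ _ _ _ _ Hwl HS Hl)].
  - rewrite prefix_cross_lab.
    exists (win (GCross (LBase n) g) K). split; [exact Hs|].
    intros t Ht; split; [exact Ht | exact (win_uproj_cross_body _ _ _ _ _ Hwl HS Ht)].
Qed.

Lemma win_prefix_uproj g : forall S K b s,
  well_labelled g -> subvalue_map_for g S K -> In b (nodes g) -> win g K s ->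
  win (prefix b (uproj g S)) (win (suffix b g) K) s.
Proof.
  induction g as [a x e | a x | a x | a Q | a Q | a ode Q | a ode Q
                  | a g1 IH1 g2 IH2 | a g1 IH1 g2 IH2 | a g1 IH1 g2 IH2 | a g IH | a g IH];
    intros S K b s Hwl HS Hb Hs;
    (destruct (label_eq_dec b a) as [Hba | Hne];
       [apply win_prefix_uproj_root; assumption |]);
    destruct (proj2 Hwl b Hb) as [n ->]; simpl in Hb;
    (destruct Hb as [Hb | Hb]; [congruence |]); try contradiction; cbn [uproj].
  - destruct (well_labelled_binary _ _ _ Hwl) as (W1 & W2 & _).
    destruct (subvalue_map_seq _ _ _ _ _ Hwl HS) as [HS1 HS2].
    destruct (in_dec label_eq_dec (LBase n) (nodes g1)) as [Hb1 | Hb1].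
    + rewrite suffix_seq_l, prefix_seq_l by label_side_conditions.
      exact (IH1 _ _ _ _ W1 HS1 Hb1 Hs).
    + apply in_app_or in Hb; destruct Hb as [Hb | Hb]; [contradiction |].
      rewrite suffix_seq_r, prefix_seq_r by label_side_conditions.
      cbn [win]. apply win_mono with (win g2 K).
      * intros t Ht; exact (IH2 _ _ _ _ W2 HS2 Hb Ht).
      * exact (win_uproj _ _ _ _ W1 HS1 Hs).
  - destruct (well_labelled_binary _ _ _ Hwl) as (W1 & W2 & _).
    destruct (subvalue_map_choice _ _ _ _ _ Hwl HS) as [HS1 HS2].
    destruct (in_dec label_eq_dec (LBase n) (nodes g1)) as [Hb1 | Hb1].
    + rewrite suffix_choice_l, prefix_dchoice_l, prefix_seq_r by label_side_conditions.
      intros Hl; exact (IH1 _ _ _ _ W1 HS1 Hb1 (subvalue_map_root _ _ _ _ HS1 Hl)).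
    + apply in_app_or in Hb; destruct Hb as [Hb | Hb]; [contradiction |].
      rewrite suffix_choice_r, prefix_dchoice_r, prefix_seq_r by label_side_conditions.
      intros Hl; exact (IH2 _ _ _ _ W2 HS2 Hb (subvalue_map_root _ _ _ _ HS2 Hl)).
  - destruct (well_labelled_binary _ _ _ Hwl) as (W1 & W2 & _).
    destruct (subvalue_map_dchoice _ _ _ _ _ Hwl HS) as [HS1 HS2].
    destruct (in_dec label_eq_dec (LBase n) (nodes g1)) as [Hb1 | Hb1].
    + rewrite suffix_dchoice_l, prefix_dchoice_l by label_side_conditions.
      exact (IH1 _ _ _ _ W1 HS1 Hb1 (proj1 Hs)).
    + apply in_app_or in Hb; destruct Hb as [Hb | Hb]; [contradiction |].
      rewrite suffix_dchoice_r, prefix_dchoice_r by label_side_conditions.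
      exact (IH2 _ _ _ _ W2 HS2 Hb (proj2 Hs)).
  - destruct (well_labelled_unary _ _ Hwl) as [W _].
    rewrite suffix_star, prefix_seq_l, prefix_cross, prefix_seq_r by label_side_conditions.
    exists (win (GStar a g) K). split; [exact Hs|]. intros t _. split; intros Hl.
    + exact (IH _ _ _ _ W (subvalue_map_star _ _ _ _ Hwl HS) Hb
               (subvalue_map_star_lab _ _ _ _ _ Hwl HS Hl)).
    + exact (win_uproj_star_body _ _ _ _ _ Hwl HS Hl).
  - destruct (well_labelled_unary _ _ Hwl) as [W _].
    rewrite suffix_cross, prefix_cross by label_side_conditions.
    exists (win (GCross a g) K). split; [exact Hs|]. intros t Ht. split.
    + exact (IH _ _ _ _ W (subvalue_map_cross _ _ _ _ Hwl HS) Hb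
               (proj2 (win_cross_unfold _ _ _ _ Ht))).
    + exact (win_uproj_cross_body _ _ _ _ _ Hwl HS Ht).
Qed.

Theorem mainTheorem1 (alpha : game) (phi : formula) (S : label -> formula) :
  well_labelled alpha ->
  angelic_subvalue_map alpha S ->
  compatible S phi ->
  forall b, In b (nodes alpha) ->
  forall s : state, fsem (S (lab alpha)) s ->
    fsem (FDia (prefix b (uproj alpha S)) (FDia (suffix b alpha) phi)) s.
Proof.
  intros Hwl Hasv Hcomp b Hb s Hs.
  pose proof (subvalue_map_of_angelic _ _ Hasv) as HS.
  apply win_mono with (win (suffix b alpha) (fsem (S LEnd))).
  - intros t; apply win_mono; exact Hcomp.
  - exact (win_prefix_uproj _ _ _ _ _ Hwl HS Hb (subvalue_map_root _ _ _ _ HS Hs)).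
Qed.
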